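(* Let $C$ be an $[n,k]$ code over $\mathbb{F}_q$ with $k\ge 2$. (a) If $C$ is a dual Hamming code, then $d(C^\perp)=3$ and $\gamma(C)=k=k-d(C^\perp)+3$. (b) If $C$ is an MDS code (i.e. its minimum Hamming weight equals $n-k+1$) having no codeword of weight $n$, then $d(C^\perp)=k+1$ and $\gamma(C)=2=k-d(C^\perp)+3$.
   Context: An $[n,k]$ code over $\mathbb{F}_q$ is a $k$-dimensional subspace $C\subseteq\mathbb{F}_q^n$; write $E=\{1,\dots,n\}$. For $\bm{x}\in\mathbb{F}_q^n$, $\mathrm{supp}(\bm{x})=\{i: x_i\neq 0\}$ and the weight is $|\mathrm{supp}(\bm{x})|$; for $B\subseteq\mathbb{F}_q^n$, $\mathrm{Supp}(B)=\bigcup_{\bm{x}\in B}\mathrm{supp}(\bm{x})$. $C^\perp$ is the dual code with respect to the standard inner product and $d(C^\perp)$ is the minimum weight of a nonzero codeword of $C^\perp$. The covering dimension is $\gamma(C)=\infty$ if $\mathrm{Supp}(C)\neq E$, and otherwise $\gamma(C)$ is the least positive integer $r$ such that $C$ has an $r$-dimensional subspace $D$ with $\mathrm{Supp}(D)=E$. A dual Hamming code is an $[(q^k-1)/(q-1),k]$ code over $\mathbb{F}_q$ with a generator matrix whose columns consist of exactly one nonzero vector from each one-dimensional subspace of $\mathbb{F}_q^k$. *)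

(* Codes are represented by generator matrices:
   the [n,k] code C is the row space of a full-row-rank matrix C : 'M[F]_(k,n). *)
From HB Require Import structures.
From mathcomp Require Import all_boot all_order all_algebra.
Set Implicit Arguments. Unset Strict Implicit. Unset Printing Implicit Defensive.
Import GRing.Theory.
Local Open Scope ring_scope.

Section Codes.
Variable F : finFieldType.
Variable n : nat.

Definition supp (x : 'rV[F]_n) : {set 'I_n} := [set i | x 0 i != 0].
Definition wt (x : 'rV[F]_n) : nat := #|supp x|.

Definition Supp m (A : 'M[F]_(m, n)) : {set 'I_n} :=
  [set i | [exists x : 'rV[F]_n, (x <= A)%MS && (x 0 i != 0)]].

(* minimum weight of a nonzero vector satisfying P
   (convention: n.+1 if there is none) *)
Definition min_wt (P : pred 'rV[F]_n) : nat :=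
  \big[minn/n.+1]_(x : 'rV[F]_n | P x && (x != 0)) wt x.

Definition code m (C : 'M[F]_(m, n)) : pred 'rV[F]_n := fun x => (x <= C)%MS.
Definition dual_code m (C : 'M[F]_(m, n)) : pred 'rV[F]_n :=
  fun x => C *m x^T == 0.

Definition dual_dist m (C : 'M[F]_(m, n)) : nat := min_wt (dual_code C).

Definition has_cover m (C : 'M[F]_(m, n)) (r : nat) : bool :=
  [exists D : 'M[F]_(r, n), [&& row_free D, (D <= C)%MS & Supp D == setT]].

(* covering dimension: None encodes infinity *)
Definition cov_dim m (C : 'M[F]_(m, n)) : option nat :=
  if Supp C == setT then
    Some (\big[minn/n]_(r < n.+1 | (0 < r)%N && has_cover C r) (r : nat))
  else None.

(* C (with k = dimension) is a dual Hamming code: some generator matrix G of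
   the same code has columns consisting of exactly one nonzero vector from
   each one-dimensional subspace of F^k. *)
Definition hamming_columns k (G : 'M[F]_(k, n)) : Prop :=
  (forall j : 'I_n, col j G != 0) /\
  (forall v : 'cV[F]_k, v != 0 -> exists! j : 'I_n, ((col j G)^T <= v^T)%MS).

Definition dual_hamming k (C : 'M[F]_(k, n)) : Prop :=
  exists G : 'M[F]_(k, n), (G == C)%MS /\ hamming_columns G.

End Codes.

From HB Require Import structures.
From mathcomp Require Import all_boot all_order all_algebra zify.
Set Implicit Arguments. Unset Strict Implicit. Unset Printing Implicit Defensive.
Import GRing.Theory.
Local Open Scope ring_scope.

(* A nonzero vector of C^perp supported in a set T of coordinates is the same thing as a
   linear dependence among the columns of C indexed by T, and a nonzero codeword vanishing
   on T exists as soon as these columns have rank < k.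
   In a dual Hamming code no two columns are proportional, while the columns proportional
   to e_0, e_1 and e_0 + e_1 are dependent: d(C^perp) = 3. A subcode of dimension r < k is
   killed by some nonzero functional w, so the column proportional to w vanishes on the
   whole subcode, which thus misses a coordinate.
   In an MDS code a codeword vanishing on k coordinates has weight at most n - k, hence is
   zero; so any k columns are independent and d(C^perp) = k + 1. The codeword c vanishing
   on a set S of k - 1 coordinates is then nonzero everywhere off S, and since the columns
   in S are independent some codeword y equals 1 on S: c and y span a 2-dimensional
   subcode of full support, whereas a 1-dimensional one would contain a word of weight n. *)

Lemma exists_superset_card (T : finType) (A : {set T}) m :
  (#|A| <= m <= #|T|)%N -> exists2 S : {set T}, A \subset S & #|S| = m.
Proof.
elim: m => [|m IH] /andP [leAm lemT].
  by exists A => //; apply/eqP; rewrite -leqn0.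
case: (ltngtP #|A| m.+1) leAm => // [ltAm _|eqAm _]; last by exists A.
have [S sAS cardS] := IH (introT andP (conj ltAm (ltnW lemT))).
have [x xS] : exists x, x \notin S.
  apply/existsP; rewrite -negb_forall; apply: contraTN lemT => /forallP allS.
  by rewrite -ltnNge ltnS -cardS subset_leq_card //; apply/subsetP => y _.
exists (x |: S); first exact: subset_trans sAS (subsetUr _ _).
by rewrite cardsU1 xS cardS.
Qed.

Lemma bigmin_leq (I : finType) (P : pred I) (f : I -> nat) d i :
  P i -> (\big[minn/d]_(j | P j) f j <= f i)%N.
Proof.
move=> Pi; have : i \in index_enum I by rewrite mem_index_enum.
elim: (index_enum I) => // j s IH; rewrite big_cons inE.
case/orP => [/eqP <-|/IH le_s]; first by rewrite Pi geq_minl.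
by case: ifP => // _; rewrite geq_min le_s orbT.
Qed.

Lemma leq_bigmin (I : finType) (P : pred I) (f : I -> nat) d m :
  (m <= d)%N -> (forall i, P i -> m <= f i)%N ->
  (m <= \big[minn/d]_(i | P i) f i)%N.
Proof. by move=> le_md le_mf; elim/big_ind: _ => // a b ma mb; rewrite leq_min ma mb. Qed.

Lemma ker_rV_of_not_free (F : fieldType) m n (A : 'M[F]_(m, n)) :
  ~~ row_free A -> exists2 v : 'rV_m, v != 0 & v *m A = 0.
Proof.
rewrite -kermx_eq0 => /rowV0Pn [v vK vnz].
by exists v => //; apply/eqP; rewrite -sub_kermx.
Qed.

Lemma row_free_leq_cols (F : fieldType) m n (A : 'M[F]_(m, n)) :
  row_free A -> (m <= n)%N.
Proof. by move=> /eqP <-; apply: rank_leq_col. Qed.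

Section MinWeight.
Variables (F : finFieldType) (n : nat).
Implicit Types (P : pred 'rV[F]_n) (x : 'rV[F]_n).

Lemma min_wt_le P x : P x -> x != 0 -> (min_wt P <= wt x)%N.
Proof. by move=> Px nzx; apply: (bigmin_leq (@wt F n)); rewrite Px nzx. Qed.

Lemma min_wt_eq P d :
  (forall x, P x -> x != 0 -> (d <= wt x)%N) ->
  (exists x, [/\ P x, x != 0 & (wt x <= d)%N]) -> min_wt P = d.
Proof.
move=> lb [x [Px nzx wtx]]; apply/eqP; rewrite eqn_leq (leq_trans (min_wt_le Px nzx)) //=.
apply: leq_bigmin => [|y /andP [Py nzy]]; last exact: lb.
by rewrite (leq_trans (lb _ Px nzx)) // (leq_trans (max_card _)) ?card_ord.
Qed.

End MinWeight.

Section Coordinates.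
Variables (F : finFieldType) (n : nat) (T : {set 'I_n}).

(* [x *m coordmx T] lists the coordinates of x indexed by T (in the order of [enum T]);
   [w *m (coordmx T)^T] extends w by zero outside T. *)
Definition coordmx : 'M[F]_(n, #|T|) := colsub enum_val 1%:M.

Lemma mul_coordmx m (A : 'M[F]_(m, n)) : A *m coordmx = colsub enum_val A.
Proof. by rewrite mulmx_colsub mulmx1. Qed.

Lemma mul_coordmx_rank (x : 'rV[F]_n) j (jT : j \in T) :
  (x *m coordmx) 0 (enum_rank_in jT j) = x 0 j.
Proof. by rewrite mul_coordmx mxE enum_rankK_in. Qed.

Lemma coordmx_trK : coordmx^T *m coordmx = 1%:M.
Proof.
apply/matrixP => s t; rewrite mul_coordmx !mxE (inj_eq enum_val_inj).
by rewrite eq_sym.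
Qed.

Lemma supp_mul_trcoordmx (w : 'rV[F]_#|T|) : supp (w *m coordmx^T) \subset T.
Proof.
apply/subsetP => j; rewrite inE; apply: contraR => jT.
rewrite mxE big1 // => t _; rewrite !mxE.
by case: eqP => [jt|]; [case/negP: jT; rewrite jt enum_valP | rewrite mulr0].
Qed.

Lemma coordmx_supp_id (x : 'rV[F]_n) :
  supp x \subset T -> x *m coordmx *m coordmx^T = x.
Proof.
move=> sxT; apply/rowP => j; rewrite mxE.
have [jT|jT] := boolP (j \in T).
  rewrite (bigD1 (enum_rank_in jT j)) //= big1 => [|t tj].
    by rewrite mul_coordmx !mxE enum_rankK_in // eqxx mulr1 addr0.
  rewrite !mxE; case: eqP => [jt|]; last by rewrite mulr0.
  by case/eqP: tj; apply: enum_val_inj; rewrite enum_rankK_in.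
have -> : x 0 j = 0 by apply/eqP; apply: contraR jT => xj; apply: (subsetP sxT); rewrite inE.
rewrite big1 // => t _; rewrite !mxE.
by case: eqP => [jt|]; [case/negP: jT; rewrite jt enum_valP | rewrite mulr0].
Qed.

End Coordinates.

Arguments coordmx {F n} T.

Section ColumnRank.
Variables (F : finFieldType) (m n : nat) (A : 'M[F]_(m, n)).

Lemma mulmx_tr_supp (x : 'rV[F]_n) :
  A *m x^T = \sum_(j in supp x) x 0 j *: col j A.
Proof.
apply: trmx_inj; rewrite trmx_mul trmxK mulmx_sum_row linear_sum [RHS]big_mkcond /=.
apply: eq_bigr => j _; rewrite inE linearZ /= tr_col.
by case: eqP => [->|_]; rewrite ?scale0r.
Qed.

Lemma dual_supp_rankP (T : {set 'I_n}) :
  reflect (exists x : 'rV[F]_n, [/\ x != 0, A *m x^T = 0 & supp x \subset T])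
          (\rank (A *m coordmx T) < #|T|)%N.
Proof.
set P := coordmx T.
rewrite -mxrank_tr ltnNge row_leq_rank trmx_mul; apply: (iffP idP).
  case/ker_rV_of_not_free => w nzw wA; exists (w *m P^T); split.
  - apply: contraNneq nzw => wP0.
    by rewrite -[w]mulmx1 -coordmx_trK mulmxA wP0 mul0mx.
  - by apply: trmx_inj; rewrite trmx0 !trmx_mul !trmxK -mulmxA.
  - exact: supp_mul_trcoordmx.
case=> x [nzx Ax sxT]; apply/negP => free_AP.
suff /eqP : x *m P *m (P^T *m A^T) = 0.
  rewrite mulmx_free_eq0 // => /eqP xP0.
  by case/eqP: nzx; rewrite -(coordmx_supp_id sxT) xP0 mul0mx.
by rewrite mulmxA coordmx_supp_id // -[x]trmxK -trmx_mul Ax trmx0.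
Qed.

Lemma vanishing_combination (T : {set 'I_n}) :
  (\rank (A *m coordmx T) < m)%N ->
  exists2 u : 'rV[F]_m, u != 0 & supp (u *m A) \subset ~: T.
Proof.
rewrite ltnNge row_leq_rank => /ker_rV_of_not_free [u nzu uA0]; exists u => //.
apply/subsetP => j; rewrite !inE; apply: contraNN => jT.
by rewrite -(mul_coordmx_rank _ jT) -mulmxA uA0 mxE.
Qed.

End ColumnRank.

Lemma dual_code_eqmx (F : finFieldType) n m1 m2 (A : 'M[F]_(m1, n)) (B : 'M[F]_(m2, n)) :
  (A == B)%MS -> dual_code A =1 dual_code B.
Proof. by move=> /eqmxP eqAB x; rewrite /dual_code -!sub_kermx eqAB. Qed.

Section Covering.
Variables (F : finFieldType) (n : nat).

Lemma Supp_col m (A : 'M[F]_(m, n)) j : (j \in Supp A) = (col j A != 0).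
Proof.
rewrite inE; apply/existsP/idP => [[_ /andP [/submxP [y ->]]]|/cV0Pn [r Arj]].
  apply: contra => /eqP colA0.
  have -> : (y *m A) 0 j = col j (y *m A) 0 0 by rewrite [RHS]mxE.
  by rewrite !colE -mulmxA -colE colA0 mulmx0 mxE.
by exists (row r A); rewrite row_sub; rewrite !mxE in Arj *.
Qed.

Lemma Supp_sub m1 m2 (A : 'M[F]_(m1, n)) (B : 'M[F]_(m2, n)) :
  (A <= B)%MS -> Supp A \subset Supp B.
Proof.
move=> sAB; apply/subsetP => j; rewrite !inE => /existsP [x /andP [sxA xj]].
by apply/existsP; exists x; rewrite (submx_trans sxA sAB).
Qed.

Lemma Supp_rV (x : 'rV[F]_n) : Supp x = supp x.
Proof.
apply/setP => j; rewrite Supp_col inE.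
by apply/cV0Pn/idP => [[r]|xj]; [rewrite ord1 mxE | exists 0; rewrite mxE].
Qed.

Lemma supp_sub_Supp m (x : 'rV[F]_n) (A : 'M[F]_(m, n)) :
  (x <= A)%MS -> supp x \subset Supp A.
Proof. by rewrite -Supp_rV; apply: Supp_sub. Qed.

Lemma has_cover_SuppT m (C : 'M[F]_(m, n)) r : has_cover C r -> Supp C = setT.
Proof.
case/existsP => D /and3P [_ sDC /eqP SuppD].
by apply/eqP; rewrite eqEsubset subsetT -SuppD Supp_sub.
Qed.

Lemma cov_dim_min m (C : 'M[F]_(m, n)) r : (0 < r)%N -> has_cover C r ->
  (forall s, (0 < s < r)%N -> ~~ has_cover C s) -> cov_dim C = Some r.
Proof.
move=> r_gt0 covr minr; rewrite /cov_dim (has_cover_SuppT covr) eqxx.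
have le_rn : (r <= n)%N.
  by case/existsP: covr => D /and3P [/row_free_leq_cols].
congr Some; apply/eqP; rewrite eqn_leq; apply/andP; split.
  pose r' : 'I_n.+1 := Ordinal (le_rn : (r < n.+1)%N).
  apply: (bigmin_leq (fun s : 'I_n.+1 => s : nat) _ (i := r')).
  by rewrite /= r_gt0 covr.
apply: leq_bigmin => // s /andP [s_gt0 covs]; rewrite leqNgt.
by apply: contraL covs => lt_sr; apply: minr; rewrite s_gt0.
Qed.

Lemma has_cover1_full_wt m (C : 'M[F]_(m, n)) :
  has_cover C 1 -> exists2 x : 'rV[F]_n, (x <= C)%MS & wt x = n.
Proof.
case/existsP => x /and3P [_ sxC /eqP Suppx]; exists x => //.
by rewrite /wt -Supp_rV Suppx cardsT card_ord.
Qed.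

Lemma has_cover2 m (C : 'M[F]_(m, n)) (c y : 'rV[F]_n) :
  (c <= C)%MS -> (y <= C)%MS -> c != 0 -> ~~ (supp y \subset supp c) ->
  supp c :|: supp y = setT -> has_cover C 2.
Proof.
move=> scC syC nzc /subsetPn [l yl cl] cover_cy.
pose D : 'M[F]_(2, n) := \matrix_(i < 2) if i == 0 then c else y.
have rowD i : row i D = if i == 0 then c else y by rewrite rowK.
have sDC : (D <= C)%MS by apply/row_subP => i; rewrite rowD; case: ifP.
apply/existsP; exists D; rewrite sDC /=; apply/andP; split.
  apply: inj_row_free => v vD0.
  have vD : v *m D = v 0 0 *: c + v 0 1 *: y.
    rewrite mulmx_sum_row big_ord_recl big_ord1 !rowD /=.
    by congr (v 0 _ *: _ + v 0 _ *: _); apply: val_inj.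
  have v1 : v 0 1 = 0.
    have := congr1 (fun u : 'rV_n => u 0 l) vD0.
    move: cl yl; rewrite vD !inE !mxE => /negbNE/eqP -> yl.
    by rewrite mulr0 add0r => /eqP; rewrite mulf_eq0 (negbTE yl) orbF => /eqP.
  have v0 : v 0 0 = 0.
    apply/eqP; move: vD0; rewrite vD v1 scale0r addr0 => /eqP.
    by rewrite scaler_eq0 (negbTE nzc) orbF.
  apply/rowP => i; rewrite mxE; case: i => [[|[|//]] ?].
  - by rewrite -v0; congr (v 0 _); apply: val_inj.
  - by rewrite -v1; congr (v 0 _); apply: val_inj.
rewrite eqEsubset subsetT /= -cover_cy subUset.
have cD : (c <= D)%MS by have := row_sub 0 D; rewrite rowD eqxx.
have yD : (y <= D)%MS by have := row_sub 1 D; rewrite rowD.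
by rewrite !supp_sub_Supp.
Qed.

End Covering.

Section MDS.
Variables (F : finFieldType) (n k : nat) (C : 'M[F]_(k, n)).
Hypothesis Cfree : row_free C.
Hypothesis mds_wt : forall x : 'rV[F]_n, (x <= C)%MS -> x != 0 -> (n - k + 1 <= wt x)%N.

Let k_le_n : (k <= n)%N := row_free_leq_cols Cfree.

Lemma mds_vanishing_eq0 (c : 'rV[F]_n) (T : {set 'I_n}) :
  (c <= C)%MS -> supp c \subset ~: T -> (k <= #|T|)%N -> c = 0.
Proof.
move=> scC scT leT; apply/eqP; apply: contraTT leT => nzc; rewrite -ltnNge.
have := leq_trans (mds_wt scC nzc) (subset_leq_card scT).
by have := cardsC T; rewrite card_ord; lia.
Qed.

Lemma mds_dual_wt (x : 'rV[F]_n) : x != 0 -> C *m x^T = 0 -> (k < wt x)%N.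
Proof.
move=> nzx Cx; rewrite ltnNge; apply/negP => wt_le.
have /exists_superset_card [T sxT cardT] : (#|supp x| <= k <= #|'I_n|)%N.
  by rewrite wt_le card_ord k_le_n.
have /vanishing_combination [u nzu suT] : (\rank (C *m coordmx T) < k)%N.
  by rewrite -[X in (_ < X)%N]cardT; apply/dual_supp_rankP; exists x.
have /eqP := mds_vanishing_eq0 (submxMl u C) suT (eq_leq (esym cardT)).
by rewrite mulmx_free_eq0 // (negbTE nzu).
Qed.

Lemma mds_rank_coordmx (T : {set 'I_n}) :
  (#|T| <= k)%N -> \rank (C *m coordmx T) = #|T|.
Proof.
move=> leTk; apply/eqP; rewrite eqn_leq rank_leq_col leqNgt /=.
apply/negP => /dual_supp_rankP [x [nzx Cx sxT]].
by have := mds_dual_wt nzx Cx; rewrite ltnNge (leq_trans (subset_leq_card sxT)).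
Qed.

Hypothesis no_full_wt : forall x : 'rV[F]_n, (x <= C)%MS -> wt x != n.

Lemma mds_k_lt_n : (k < n)%N.
Proof.
rewrite ltn_neqAle k_le_n andbT; apply/negP => /eqP kn.
have Cfull : row_full C by rewrite /row_full (eqP Cfree) kn.
have /eqP := no_full_wt (submx_full (const_mx 1) Cfull); apply.
rewrite /wt -[RHS]card_ord; apply: eq_card => j.
by rewrite inE mxE oner_neq0.
Qed.

Lemma mds_dual_dist : dual_dist C = k.+1.
Proof.
apply: min_wt_eq => [x /eqP Cx nzx|]; first exact: mds_dual_wt.
have /exists_superset_card [T _ cardT] : (#|@set0 'I_n| <= k.+1 <= #|'I_n|)%N.
  by rewrite cards0 card_ord mds_k_lt_n.
have /dual_supp_rankP [x [nzx Cx sxT]] : (\rank (C *m coordmx T) < #|T|)%N.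
  by rewrite [X in (_ < X)%N]cardT ltnS (leq_trans (mxrankM_maxl _ _)) ?rank_leq_row.
by exists x; rewrite /dual_code Cx eqxx -cardT subset_leq_card.
Qed.

Lemma mds_cover2 : (2 <= k)%N -> has_cover C 2.
Proof.
move=> k_ge2.
have /exists_superset_card [S _ cardS] : (#|@set0 'I_n| <= k - 1 <= #|'I_n|)%N.
  by rewrite cards0 card_ord (leq_trans (leq_subr 1 k)).
have ltSk : (#|S| < k)%N by rewrite cardS; lia.
have [u nzu suS] : exists2 u : 'rV_k, u != 0 & supp (u *m C) \subset ~: S.
  exact/vanishing_combination/(leq_ltn_trans (rank_leq_col _) ltSk).
have suppc : supp (u *m C) = ~: S.
  apply/eqP; rewrite eqEcard suS /=.
  apply: leq_trans (mds_wt (submxMl u C) _); last by rewrite mulmx_free_eq0.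
  by rewrite [#|~: S|]cardsCs setCK card_ord cardS; lia.
have Sfull : row_full (C *m coordmx S) by rewrite /row_full mds_rank_coordmx // ltnW.
have [w wE] := submxP (submx_full (const_mx 1 : 'rV[F]_#|S|) Sfull).
have Ssy : S \subset supp (w *m C).
  apply/subsetP => j jS; rewrite inE -(mul_coordmx_rank _ jS) -mulmxA -wE mxE.
  exact: oner_neq0.
have [l lS] : exists l, l \in S by apply/set0Pn; rewrite -card_gt0 cardS; lia.
apply: (has_cover2 (submxMl u C) (submxMl w C)).
- by rewrite mulmx_free_eq0.
- by apply/subsetPn; exists l; rewrite ?(subsetP Ssy) // suppc inE lS.
- by apply/eqP; rewrite eqEsubset subsetT suppc -(setUCr S) setUC setUS.
Qed.

Lemma mds_cov_dim : (2 <= k)%N -> cov_dim C = Some 2%N.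
Proof.
move=> k_ge2; apply: cov_dim_min (mds_cover2 k_ge2) _ => // -[|[|//]] // _.
by apply/negP => /has_cover1_full_wt [x sxC]; apply/eqP/no_full_wt.
Qed.

End MDS.

Section DualHamming.
Variables (F : finFieldType) (n k : nat) (C G : 'M[F]_(k, n)).
Hypothesis eqGC : (G == C)%MS.
Hypothesis Gcol_nz : forall j, col j G != 0.
Hypothesis Gcol_uniq :
  forall v : 'cV[F]_k, v != 0 -> exists! j, ((col j G)^T <= v^T)%MS.

Lemma hamming_col_inj i j : ((col i G)^T <= (col j G)^T)%MS -> i = j.
Proof.
move=> sij; have [j0 [_ j0_uniq]] := Gcol_uniq (Gcol_nz j).
by rewrite -(j0_uniq _ sij) (j0_uniq _ (submx_refl _)).
Qed.

Lemma hamming_col_of (v : 'cV[F]_k) :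
  v != 0 -> exists j a, a != 0 /\ col j G = a *: v.
Proof.
case/Gcol_uniq => j [/sub_rVP [a colj] _]; exists j, a.
have {}colj : col j G = a *: v by apply: trmx_inj; rewrite colj linearZ.
by split=> //; apply: contraNneq (Gcol_nz j) => a0; rewrite colj a0 scale0r.
Qed.

Lemma hamming_dual_wt (x : 'rV[F]_n) : x != 0 -> G *m x^T = 0 -> (3 <= wt x)%N.
Proof.
move=> nzx; rewrite mulmx_tr_supp leqNgt; apply: contra_eqN => wt_lt3.
have supp_nz i : i \in supp x -> x 0 i != 0 by rewrite inE.
have wt_gt0 : (0 < wt x)%N.
  by rewrite card_gt0; apply/set0Pn; case/rV0Pn: nzx => i xi; exists i; rewrite inE.
have /orP [/cards1P [i suppx]|/cards2P [i [j [nij suppx]]]] : (wt x == 1) || (wt x == 2).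
  by move: wt_gt0 wt_lt3; rewrite /wt; case: #|_| => [|[|[|]]].
  have xi : x 0 i != 0 by rewrite supp_nz // suppx set11.
  by rewrite suppx big_set1 scaler_eq0 negb_or xi Gcol_nz.
have xi : x 0 i != 0 by rewrite supp_nz // suppx !inE eqxx.
rewrite suppx big_setU1 ?inE // big_set1 addr_eq0.
apply: contraNneq nij => coli; apply/eqP/hamming_col_inj/sub_rVP.
exists (- (x 0 j / x 0 i)); rewrite -linearZ /=; congr (_^T); apply: (scalerI xi).
by rewrite coli scalerA mulrN mulrCA divff // mulr1 scaleNr.
Qed.

Lemma hamming_dual_wt3 : (2 <= k)%N ->
  exists x : 'rV[F]_n, [/\ x != 0, G *m x^T = 0 & (wt x <= 3)%N].
Proof.
move=> k_ge2; pose i0 : 'I_k := Ordinal (ltnW k_ge2); pose i1 : 'I_k := Ordinal k_ge2.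
pose v1 : 'cV[F]_k := delta_mx i0 0; pose v2 : 'cV[F]_k := delta_mx i1 0.
have nz_delta i : delta_mx i 0 != 0 :> 'cV[F]_k.
  by apply/cV0Pn; exists i; rewrite mxE !eqxx oner_neq0.
have nz12 : v1 + v2 != 0.
  by apply/cV0Pn; exists i0; rewrite !mxE !eqxx andbT addr0 oner_neq0.
have [j1 [a1 [nza1 col1]]] := hamming_col_of (nz_delta i0).
have [j2 [a2 [nza2 col2]]] := hamming_col_of (nz_delta i1).
have [j3 [a3 [nza3 col3]]] := hamming_col_of nz12.
have col_neq j j' a a' v v' r : a != 0 -> a' != 0 ->
    col j G = a *: v -> col j' G = a' *: v' -> (v r 0 == 0) != (v' r 0 == 0) -> j != j'.
  move=> nza nza' colj colj'; apply: contraNneq => jj'; subst j'.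
  have := congr1 (fun M : 'cV_k => M r 0 == 0) (etrans (esym colj) colj').
  by rewrite !mxE !mulf_eq0 (negbTE nza) (negbTE nza') /= => ->.
have nj12 : j1 != j2.
  by apply: (col_neq _ _ _ _ _ _ i0 nza1 nza2 col1 col2); rewrite !mxE !eqxx /= ?oner_eq0.
have nj13 : j1 != j3.
  apply: (col_neq _ _ _ _ _ _ i1 nza1 nza3 col1 col3).
  by rewrite !mxE !eqxx /= ?add0r ?oner_eq0.
have nj23 : j2 != j3.
  apply: (col_neq _ _ _ _ _ _ i0 nza2 nza3 col2 col3).
  by rewrite !mxE !eqxx /= ?addr0 ?oner_eq0.
pose T := j1 |: (j2 |: [set j3]).
have cardT : #|T| = 3%N by rewrite /T !cardsU1 cards1 !inE negb_or nj12 nj13 nj23.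
have rankT : (\rank (G *m coordmx T) <= 2)%N.
  rewrite -mxrank_tr; apply: leq_trans (mxrankS (_ : _ <= v1^T + v2^T)%MS) _.
    apply/row_subP => t; rewrite -tr_col mul_coordmx col_colsub.
    have : enum_val t \in T := enum_valP t.
    rewrite !inE => /or3P [] /eqP ->; rewrite ?col1 ?col2 ?col3 linearZ scalemx_sub //.
    - exact: addsmxSl.
    - exact: addsmxSr.
    - by rewrite linearD addmx_sub_adds.
  apply: leq_trans (leq_of_leqif (mxrank_adds_leqif _ _)) _.
  exact: (leq_add (rank_leq_row _) (rank_leq_row _)).
have /dual_supp_rankP [x [nzx Gx sxT]] : (\rank (G *m coordmx T) < #|T|)%N.
  by rewrite [X in (_ < X)%N]cardT.
by exists x; rewrite -cardT subset_leq_card.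
Qed.

Lemma hamming_dual_dist : (2 <= k)%N -> dual_dist C = 3%N.
Proof.
move=> k_ge2; apply: min_wt_eq => [x Cx nzx|].
  by apply: hamming_dual_wt nzx _; apply/eqP; move: Cx; rewrite -(dual_code_eqmx eqGC).
have [x [nzx Gx wtx]] := hamming_dual_wt3 k_ge2.
by exists x; rewrite -(dual_code_eqmx eqGC) /dual_code Gx eqxx.
Qed.

Lemma hamming_no_cover r : (r < k)%N -> ~~ has_cover C r.
Proof.
move=> lt_rk; apply/negP => /existsP [D /and3P [_ sDC /eqP SuppD]].
have [A DA] := submxP (submx_trans sDC (proj2 (andP eqGC))).
have /ker_rV_of_not_free [w nzw wA] : ~~ row_free A^T.
  by rewrite -row_leq_rank -ltnNge (leq_ltn_trans (rank_leq_col _)).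
have nzwT : w^T != 0 by rewrite -(inj_eq trmx_inj) trmxK trmx0.
have [j [a [_ colj]]] := hamming_col_of nzwT.
have : j \in Supp D by rewrite SuppD inE.
rewrite Supp_col DA colE -mulmxA -colE colj -scalemxAr.
by rewrite -[A]trmxK -trmx_mul wA trmx0 scaler0 eqxx.
Qed.

Lemma hamming_cov_dim : (0 < k)%N -> row_free C -> cov_dim C = Some k.
Proof.
move=> k_gt0 Cfree; apply: cov_dim_min => // [|s /andP [_]]; last exact: hamming_no_cover.
apply/existsP; exists C; rewrite Cfree submx_refl eqEsubset subsetT /=.
apply: subset_trans (Supp_sub (proj1 (andP eqGC))).
by apply/subsetP => j _; rewrite Supp_col Gcol_nz.
Qed.

End DualHamming.

Theorem mainTheorem3 (F : finFieldType) (n k : nat) (C : 'M[F]_(k, n)) :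
  (2 <= k)%N -> row_free C ->
  (dual_hamming C ->
     dual_dist C = 3%N /\ cov_dim C = Some k /\
     cov_dim C = Some (k + 3 - dual_dist C)%N) /\
  (min_wt (code C) = (n - k + 1)%N ->
   (forall x : 'rV[F]_n, (x <= C)%MS -> wt x != n) ->
     dual_dist C = k.+1 /\ cov_dim C = Some 2%N /\
     cov_dim C = Some (k + 3 - dual_dist C)%N).
Proof.
move=> k_ge2 Cfree; split.
  case=> G [eqGC [Gcol_nz Gcol_uniq]].
  rewrite (hamming_dual_dist eqGC Gcol_nz Gcol_uniq k_ge2).
  by rewrite (hamming_cov_dim eqGC Gcol_nz Gcol_uniq (ltnW k_ge2) Cfree) addnK.
move=> min_wtC no_full_wt.
have mds_wt x : (x <= C)%MS -> x != 0 -> (n - k + 1 <= wt x)%N.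
  by move=> sxC nzx; rewrite -min_wtC min_wt_le.
rewrite (mds_dual_dist Cfree mds_wt no_full_wt) (mds_cov_dim Cfree mds_wt no_full_wt k_ge2).
by rewrite addnS subSS addKn.
Qed.
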